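(* Let $k\ge0$, let $G$ be a graph, let $u,v$ be distinct vertices of $G$, and let $R\neq\emptyset$ be a subset of $V(G)\setminus\{u,v\}$ such that, with $L=V(G)\setminus(\{u,v\}\cup R)$, the set $C$ of edges between $R$ and $L$ has at most $k$ elements. Let $\tau$ be a linear order of $C$, listing $C$ as $c_1,\dots,c_\ell$, and let $\chi\colon C\to\{0,\dots,k\}$. Let $G_{\tau,(u,v),R}$ be the graph obtained from $G[\{u,v\}\cup R]$ by adding new vertices $t_1,\dots,t_\ell$ and, for each $i\in[\ell]$, an edge between $t_i$ and the endpoint of $c_i$ in $R$ (this edge is again denoted $c_i$). If $G_{\tau,(u,v),R}$ admits an outer $k$-planar drawing $D$ such that (P1) the cyclic order of $D$ contains $(u,t_1,\dots,t_\ell,v)$ as a consecutive subsequence, and (P2) $\chi(c_i)$ equals the number of edges crossing $c_i$ in $D$ for every $i\in[\ell]$, then there is a vertex $w\in R$ such that each of the vertex pairs $\{u,w\}$ and $\{v,w\}$ is pierced by at most $k$ edges in $D$.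
   Context: A circular drawing of a graph is a cyclic order $(v_1,\dots,v_n)$ of its vertices. An edge $\{v_i,v_j\}$ ($i<j$) pierces a pair of (not necessarily adjacent) vertices $\{v_{i'},v_{j'}\}$ ($i'<j'$) if $i<i'<j<j'$ or $i'<i<j'<j$; if $\{v_{i'},v_{j'}\}$ is an edge, the two edges are said to cross. A circular drawing is outer $k$-planar if every edge crosses at most $k$ edges. *)

From mathcomp Require Import all_boot.
Set Implicit Arguments. Unset Strict Implicit. Unset Printing Implicit Defensive.

(* A circular drawing is a duplicate-free sequence D listing the vertices
   in cyclic order (any rotation represents the same cyclic order). *)
Section Drawing.
Variable W : finType.
Variable E : rel W.
Variable D : seq W.

Definition pos (x : W) : nat := index x D.

Definition pierces (a b x y : W) : bool :=
  let i := minn (pos a) (pos b) in let j := maxn (pos a) (pos b) in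
  let i' := minn (pos x) (pos y) in let j' := maxn (pos x) (pos y) in
  [&& i < i', i' < j & j < j'] || [&& i' < i, i < j' & j' < j].

Definition piercing_edges (x y : W) : {set {set W}} :=
  [set f : {set W} | [exists a, exists b,
     [&& f == [set a; b], E a b & pierces a b x y]]].

Definition npierce (x y : W) : nat := #|piercing_edges x y|.

Definition ncross (a b : W) : nat :=
  #|[set f : {set W} | [exists x, exists y,
     [&& f == [set x; y], E x y & pierces a b x y]]]|.

Definition circular_drawing (VS : {set W}) : Prop :=
  uniq D /\ forall x, (x \in D) = (x \in VS).

Definition outer_kplanar (k : nat) : Prop :=
  forall a b, E a b -> ncross a b <= k.
End Drawing.

(* The graph G_{tau,(u,v),R}; cs lists C = edges between R and L
   as pairs (r, l) with r in R, l in L, in the order tau;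
   vertex inr i is t_{i+1}. *)
Section Gtau.
Variable V : finType.
Variable e : rel V.
Variables (u v : V) (R : {set V}) (cs : seq (V * V)).

Definition URset : {set V} := u |: (v |: R).

Definition Gtau_vertices : {set V + 'I_(size cs)} :=
  [set a | match a with inl x => x \in URset | inr _ => true end].

Definition Gtau_edge : rel (V + 'I_(size cs)) := fun a b =>
  match a, b with
  | inl x, inl y => [&& e x y, x \in URset & y \in URset]
  | inl x, inr i => x == (nth (u, u) cs i).1
  | inr i, inl x => x == (nth (u, u) cs i).1
  | inr _, inr _ => false
  end.

Definition tseq : seq (V + 'I_(size cs)) := [seq inr i | i <- enum 'I_(size cs)].
End Gtau.
Arguments Gtau_edge [V] e u v R cs _ _.

From mathcomp Require Import all_boot zify.
Set Implicit Arguments. Unset Strict Implicit. Unset Printing Implicit Defensive.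

(* Rotate the drawing so that it reads u, t_1, ..., t_l, v and then the
   vertices of R.  Piercing is invariant under rotation, so it can be read
   off positions on a line.  Let F_q (resp. G_q) be the set of edges piercing
   the pair formed by u (resp. v) and the vertex at position q, and call q
   u-light (resp. v-light) if |F_q| <= k (resp. |G_q| <= k).  The last vertex
   is u-light and the first vertex of R is v-light; let x0 be the leftmost
   u-light and y0 the rightmost v-light vertex of R.
   If x0 <= y0, a q in [x0, y0] minimising |F_q u G_q| is both u- and
   v-light, because G_q \ F_q grows and F_q \ G_q shrinks as q moves right.
   If y0 < x0, some edge inside R jumps over y0 (otherwise all of F_y0 would
   be edges at the t_i, making y0 u-light).  Take the jumping edge a1 b1
   with rightmost b1, then leftmost a1: every edge of F_a1 u G_b1 crosses it
   or is one of the l <= k edges at the t_i, and every edge of F_a1 n G_b1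
   does both.  Hence 2k + 2 <= |F_a1| + |G_b1| <= cr(a1 b1) + l <= 2k. *)

Definition between (i j x : nat) : bool := (i < x < j) || (j < x < i).

Definition separates (i j x y : nat) : bool :=
  [&& x != i, x != j, y != i, y != j & between i j x (+) between i j y].

Lemma separatesC i j x y : separates i j x y = separates j i x y.
Proof.
by rewrite /separates /between orbC [(j < y < i) || _]orbC; do 4!case: (_ != _).
Qed.

Lemma separatesCr i j x y : separates i j x y = separates i j y x.
Proof. by rewrite /separates addbC; do 4!case: (_ != _). Qed.

Lemma separates_neq i j x y : separates i j x y -> x != y.
Proof. by apply: contraTneq => ->; rewrite /separates addbb !andbF. Qed.

Lemma separates_interleave i j x y : i < j -> x < y ->
  separates i j x y = [&& i < x, x < j & j < y] || [&& x < i, i < y & y < j].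
Proof. by rewrite /separates /between => ij xy; apply/idP/idP; lia. Qed.

Lemma pierces_separates (W : finType) (D : seq W) a b x y :
  pierces D a b x y = separates (pos D x) (pos D y) (pos D a) (pos D b).
Proof.
rewrite /pierces; move: (pos D a) (pos D b) (pos D x) (pos D y) => i j i' j'.
wlog ij : i j / i <= j.
  move=> sorted; case/orP: (leq_total i j) => [/sorted //|/sorted].
  by rewrite minnC maxnC separatesCr.
wlog ij' : i' j' / i' <= j'.
  move=> sorted; case/orP: (leq_total i' j') => [/sorted //|/sorted].
  by rewrite [minn j' _]minnC [maxn j' _]maxnC separatesC.
rewrite (minn_idPl ij) (maxn_idPr ij) (minn_idPl ij') (maxn_idPr ij').
rewrite /separates /between; apply/idP/idP; lia.
Qed.

Lemma set2_eq (T : finType) (a b c d : T) :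
  [set a; b] = [set c; d] -> (a = c /\ b = d) \/ (a = d /\ b = c).
Proof.
move/setP=> h; move: (h a) (h b) (h c) (h d); rewrite !inE !eqxx ?orbT /=.
case: (eqVneq a c) => [<- _|_ /esym/eqP ad _ /eqP cb _]; last by right.
move=> /esym/orP[/eqP->|/eqP->] _; last by left.
by rewrite orbb => /eqP ->; left.
Qed.

Lemma leq_add_cardsUI (T : finType) (A B X Y : {set T}) :
  A :|: B \subset X :|: Y -> A :&: B \subset X :&: Y -> #|A| + #|B| <= #|X| + #|Y|.
Proof.
by move=> sU sI; rewrite -cardsUI -[#|X| + _]cardsUI leq_add // subset_leq_card.
Qed.

Lemma cardsUDl (T : finType) (A B : {set T}) : #|A :|: B| = #|A| + #|B :\: A|.
Proof. by rewrite -(cardsID A (A :|: B)) setUK setDUl setDv set0U. Qed.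

Definition rot_pos (N n x : nat) : nat := if n <= x then x - n else x + (N - n).

Lemma index_rot (T : eqType) (s : seq T) n x : uniq s -> x \in s -> n <= size s ->
  index x (rot n s) = rot_pos (size s) n (index x s).
Proof.
move=> us xs ns; have ixs : index x s < size s by rewrite index_mem.
rewrite -{1}(nth_index x xs) /rot_pos; set i := index x s in ixs *.
have ur : uniq (rot n s) by rewrite rot_uniq.
case: (leqP n i) => ni.
- have -> : nth x s i = nth x (rot n s) (i - n).
    by rewrite nth_cat size_drop ifT ?nth_drop ?subnKC //; lia.
  by rewrite index_uniq // size_rot; lia.
- have -> : nth x s i = nth x (rot n s) (i + (size s - n)).
    by rewrite nth_cat size_drop ifF ?nth_take; [congr nth| |]; lia.
  by rewrite index_uniq // size_rot; lia.
Qed.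

Lemma eq_rot_pos N n x y : n <= N -> x < N -> y < N ->
  (rot_pos N n x == rot_pos N n y) = (x == y).
Proof.
by rewrite /rot_pos => *; case: (leqP n x); case: (leqP n y) => *; apply/eqP/eqP; lia.
Qed.

Lemma between_rot_pos N n i j x : n <= N -> i < N -> j < N -> x < N -> x != i -> x != j ->
  between (rot_pos N n i) (rot_pos N n j) (rot_pos N n x) =
  between i j x (+) (n <= i) (+) (n <= j).
Proof.
rewrite /between /rot_pos => *.
by case: (leqP n i); case: (leqP n j); case: (leqP n x) => * /=; apply/idP/idP; lia.
Qed.

Lemma separates_rot_pos N n i j x y : n <= N -> i < N -> j < N -> x < N -> y < N ->
  separates (rot_pos N n i) (rot_pos N n j) (rot_pos N n x) (rot_pos N n y) =
  separates i j x y.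
Proof.
move=> nN iN jN xN yN; rewrite /separates !eq_rot_pos //.
case: (eqVneq x i) => //= xi; case: (eqVneq x j) => //= xj.
case: (eqVneq y i) => //= yi; case: (eqVneq y j) => //= yj.
rewrite !between_rot_pos //.
by case: (between i j x); case: (between i j y); case: (n <= i); case: (n <= j).
Qed.

Lemma pierces_sym (W : finType) (D : seq W) a b x y :
  pierces D a b x y = pierces D x y a b.
Proof. by rewrite /pierces orbC. Qed.

Lemma ncross_npierce (W : finType) (E : rel W) (D : seq W) a b :
  ncross E D a b = npierce E D a b.
Proof.
apply: eq_card => f; rewrite !inE.
by under eq_existsb do under eq_existsb do rewrite pierces_sym.
Qed.

Section PierceSet.
Variables (W : finType) (E : rel W) (p : W -> nat).

Definition pierce_set (i j : nat) : {set {set W}} :=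
  [set f | [exists a, exists b, [&& f == [set a; b], E a b & separates i j (p a) (p b)]]].

Lemma pierce_setP i j f :
  reflect (exists a b, [/\ f = [set a; b], E a b & separates i j (p a) (p b)])
          (f \in pierce_set i j).
Proof.
rewrite inE; apply: (iffP existsP).
  by case=> a /existsP [b /and3P [/eqP ? ? ?]]; exists a, b.
case=> a [b [? ? ?]].
by exists a; apply/existsP; exists b; apply/and3P; split=> //; apply/eqP.
Qed.

Lemma mem_pierce_set i j a b : E a b ->
  ([set a; b] \in pierce_set i j) = separates i j (p a) (p b).
Proof.
move=> Eab; apply/pierce_setP/idP => [[a' [b' [/set2_eq [] [-> ->] _ //]]]|sep].
  by rewrite separatesCr.
by exists a, b.
Qed.

End PierceSet.

Section RotatedDrawing.
Variables (W : finType) (E : rel W) (D : seq W) (r : nat).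
Hypotheses (D_uniq : uniq D) (E_in_D : forall a b, E a b -> (a \in D) && (b \in D)).
Local Notation p := (index ^~ (rot r D)).

Lemma pierces_rot a b x y : a \in D -> b \in D -> x \in D -> y \in D ->
  pierces D a b x y = separates (p x) (p y) (p a) (p b).
Proof.
move=> aD bD xD yD; have rD := geq_minr r (size D).
by rewrite pierces_separates rot_minn !index_rot // separates_rot_pos // index_mem.
Qed.

Lemma piercing_edges_rot x y : x \in D -> y \in D ->
  piercing_edges E D x y = pierce_set E p (p x) (p y).
Proof.
move=> xD yD; apply/setP => f; rewrite !inE.
apply: eq_existsb => a; apply: eq_existsb => b.
case Eab: (E a b); rewrite ?andbF //=.
by case/andP: (E_in_D Eab) => aD bD; rewrite pierces_rot.
Qed.

End RotatedDrawing.

(* Positions in the rotated drawing: u at 0, t_1, ..., t_l at 1..l, v at l+1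
   and R beyond; T holds the edges at the t_i. *)
Section LinearLayout.
Variables (W : finType) (E : rel W) (p : W -> nat) (k l N : nat) (T : {set {set W}}).
Hypotheses (E_sym : symmetric E) (E_pos_lt : forall a b, E a b -> p a < N)
  (card_T : #|T| <= k)
  (nonT_edge_pos : forall a b, E a b -> [set a; b] \notin T -> (p a == 0) || (l < p a))
  (E_k_planar : forall a b, E a b -> #|pierce_set E p (p a) (p b)| <= k)
  (N_big : l.+3 <= N).

Local Notation F q := (pierce_set E p 0 q).
Local Notation G q := (pierce_set E p l.+1 q).

Lemma pierce_set_sorted i j f : i < j -> f \in pierce_set E p i j ->
  exists a b, [/\ f = [set a; b], E a b, p a < p b &
    [&& i < p a, p a < j & j < p b] || [&& p a < i, i < p b & p b < j]].
Proof.
move=> ij /pierce_setP [a [b [-> Eab sep]]].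
case: (ltngtP (p a) (p b)) => [ab|ba|ab].
- by exists a, b; rewrite -separates_interleave.
- by exists b, a; rewrite setUC E_sym -separates_interleave // separatesCr.
- by move: (separates_neq sep); rewrite ab eqxx.
Qed.

Lemma nonT_edge_outer a b : E a b -> [set a; b] \notin T ->
  ((p a == 0) || (l < p a)) && ((p b == 0) || (l < p b)).
Proof.
move=> Eab nT; rewrite (nonT_edge_pos Eab nT) (@nonT_edge_pos b a) //.
  by rewrite E_sym.
by rewrite setUC.
Qed.

Lemma subset_GDF q q' : l.+1 < q <= q' -> G q :\: F q \subset G q' :\: F q'.
Proof.
move=> /andP [lq qq']; apply/subsetP => f /setDP [/pierce_set_sorted].
case=> [|a [b [-> Eab ab sep]]]; first by [].
rewrite in_setD !mem_pierce_set // !separates_interleave //; lia.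
Qed.

Lemma subset_FDG q q' : l.+1 < q <= q' -> F q' :\: G q' \subset F q :\: G q.
Proof.
move=> /andP [lq qq']; apply/subsetP => f /setDP [/pierce_set_sorted].
case=> [|a [b [-> Eab ab sep]]]; first lia.
rewrite in_setD !mem_pierce_set // !separates_interleave //; lia.
Qed.

Lemma F_last : F N.-1 = set0.
Proof.
apply/setP => f; rewrite in_set0; apply/negbTE/negP => /pierce_set_sorted.
case=> [|a [b [_ Eab ab]]]; first lia.
rewrite E_sym in Eab; have := E_pos_lt Eab; lia.
Qed.

Lemma G_next : G l.+2 = set0.
Proof.
apply/setP => f; rewrite in_set0; apply/negbTE/negP => /pierce_set_sorted.
by case=> [|a [b [_ _ _]]] //; lia.
Qed.

Lemma exists_light_between (x0 y0 : 'I_N) : l.+1 < x0 <= y0 ->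
  #|F x0| <= k -> #|G y0| <= k ->
  exists2 q : 'I_N, x0 <= q <= y0 & (#|F q| <= k) && (#|G q| <= k).
Proof.
move=> /andP [lx xy] Fx Gy.
have Mx : x0 <= x0 <= y0 by rewrite leqnn xy.
have My : x0 <= y0 <= y0 by rewrite xy leqnn.
pose M := [pred q : 'I_N | x0 <= q <= y0].
case: (@arg_minnP _ x0 M (fun q => #|F q :|: G q|) Mx) => q /andP [xq qy] qmin.
exists q; first by rewrite xq qy.
have lq : l.+1 < q by apply: leq_trans xq.
have cardFG z : #|F z :|: G z| = #|F z| + #|G z :\: F z| by rewrite cardsUDl.
have cardGF z : #|F z :|: G z| = #|G z| + #|F z :\: G z| by rewrite setUC cardsUDl.
have := qmin x0 Mx; rewrite !cardFG => min_x.
have := qmin y0 My; rewrite !cardGF => min_y.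
have := subset_leq_card (@subset_GDF x0 q _); rewrite lx xq => /(_ isT) GDF.
have := subset_leq_card (@subset_FDG q y0 _); rewrite lq qy => /(_ isT) FDG.
apply/andP; split; lia.
Qed.

Section NoGap.
Variables (x0 y0 : nat).
Hypotheses (l_lt_y0 : l.+1 < y0) (y0_lt_x0 : y0 < x0) (y0_lt_N : y0 < N)
  (x0_min : forall q, l.+1 < q < N -> #|F q| <= k -> x0 <= q)
  (y0_max : forall q, l.+1 < q < N -> #|G q| <= k -> q <= y0).

Lemma u_edge_far a b : E a b -> p a = 0 -> l.+1 < p b -> x0 <= p b.
Proof.
move=> Eab pa lb; apply: x0_min; last by rewrite -pa E_k_planar.
by rewrite lb (@E_pos_lt b a) // E_sym.
Qed.

Lemma v_edge_near a b : E a b -> p a = l.+1 -> l.+1 < p b -> p b <= y0.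
Proof.
move=> Eab pa lb; apply: y0_max; last by rewrite -pa E_k_planar.
by rewrite lb (@E_pos_lt b a) // E_sym.
Qed.

Definition jump (a b : W) : bool := [&& E a b, l.+1 < p a, p a < y0 & y0 < p b].

Lemma exists_jump : exists a b, jump a b.
Proof.
suff /existsP [a /existsP [b jab]] : [exists a, exists b, jump a b] by exists a, b.
apply: contraT; rewrite negb_exists => /forallP no_jump.
suff FT : F y0 \subset T.
  have := leq_trans (subset_leq_card FT) card_T.
  by move/(x0_min (q := y0)); rewrite l_lt_y0 y0_lt_N leqNgt y0_lt_x0 => /(_ isT).
apply/subsetP => f /pierce_set_sorted [|a [b [-> Eab ab sep]]]; first lia.
apply: contraT => /(nonT_edge_outer Eab) /andP [oa ob].
have /existsPn/(_ b) := no_jump a; have := @v_edge_near a b Eab; rewrite /jump Eab; lia.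
Qed.

Section ExtremalJump.
Variables (a1 b1 : W).
Hypotheses (jump1 : jump a1 b1) (b1_max : forall a b, jump a b -> p b <= p b1)
  (a1_min : forall a b, jump a b -> p b = p b1 -> p a1 <= p a).

Local Notation X := (pierce_set E p (p a1) (p b1)).

Lemma jump_bound a b : E a b -> l.+1 < p a < y0 -> y0 < p b ->
  p b <= p b1 /\ (p b = p b1 -> p a1 <= p a).
Proof.
move=> Eab /andP [la ay] yb; have jab : jump a b by rewrite /jump Eab la ay.
by split; [apply: b1_max jab | apply: a1_min jab].
Qed.

Lemma F_cover : F (p a1) \subset X :|: T.
Proof.
case/and4P: jump1 => _ la1 a1y yb1.
apply/subsetP => f /pierce_set_sorted [|a [b [-> Eab ab sep]]]; first lia.
rewrite in_setU; case: (boolP (_ \in T)) => [|nT]; first by rewrite orbT.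
have /andP [oa _] := nonT_edge_outer Eab nT.
rewrite mem_pierce_set // separates_interleave //; last lia.
have := @v_edge_near a b Eab; have := @jump_bound a b Eab; lia.
Qed.

Lemma G_cover : G (p b1) \subset X :|: T.
Proof.
case/and4P: jump1 => _ la1 a1y yb1.
apply/subsetP => f /pierce_set_sorted [|a [b [-> Eab ab sep]]]; first lia.
rewrite in_setU; case: (boolP (_ \in T)) => [|nT]; first by rewrite orbT.
have /andP [oa _] := nonT_edge_outer Eab nT.
rewrite mem_pierce_set // separates_interleave //; last lia.
have := @u_edge_far a b Eab; have := @jump_bound a b Eab; lia.
Qed.

Lemma FG_cover : F (p a1) :&: G (p b1) \subset X :&: T.
Proof.
case/and4P: jump1 => _ la1 a1y yb1.
apply/subsetP => f /setIP [/pierce_set_sorted [|a [b [-> Eab ab sepF]]]]; first lia.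
rewrite mem_pierce_set // separates_interleave //; last lia.
move=> sepG; have := @jump_bound a b Eab.
rewrite in_setI mem_pierce_set // separates_interleave //; last lia.
case: (boolP (_ \in T)) => [_|/(nonT_edge_outer Eab)]; lia.
Qed.

Lemma extremal_jump_contra : False.
Proof.
case/and4P: jump1 => Eab1 la1 a1y yb1.
have a1N : l.+1 < p a1 < N by rewrite la1 (E_pos_lt Eab1).
have b1N : l.+1 < p b1 < N by rewrite (@E_pos_lt b1 a1) 1?E_sym // andbT; lia.
have hF : k < #|F (p a1)| by rewrite ltnNge; apply/negP => /(x0_min a1N); lia.
have hG : k < #|G (p b1)| by rewrite ltnNge; apply/negP => /(y0_max b1N); lia.
have := leq_add_cardsUI (introT subUsetP (conj F_cover G_cover)) FG_cover.
have := E_k_planar Eab1; lia.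
Qed.

End ExtremalJump.

Lemma no_light_gap : False.
Proof.
have [a [b jab]] := exists_jump.
pose J := [pred ab : W * W | jump ab.1 ab.2].
case: (@arg_maxnP _ (a, b) J (fun ab => p ab.2) jab) => [[a' b'] jab' b'_max].
pose J' := [pred ab : W * W | jump ab.1 ab.2 && (p ab.2 == p b')].
have J'ab' : J' (a', b') by rewrite /J' /= eqxx andbT.
case: (@arg_minnP _ _ J' (fun ab => p ab.1) J'ab') => [[a1 b1]].
move=> /andP [/= j1 /eqP e1] a1_min.
apply: (@extremal_jump_contra a1 b1 j1) => [c d /(b'_max (c, d))|c d jcd cd].
  by rewrite e1.
by apply: (a1_min (c, d)); rewrite /J' /= jcd cd e1 eqxx.
Qed.

End NoGap.

Lemma exists_light_pos : exists2 q, l.+1 < q < N & (#|F q| <= k) && (#|G q| <= k).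
Proof.
have lastN : N.-1 < N by lia.
have firstN : l.+2 < N by lia.
pose A := [pred q : 'I_N | (l.+1 < q) && (#|F q| <= k)].
pose B := [pred q : 'I_N | (l.+1 < q) && (#|G q| <= k)].
have A_last : A (Ordinal lastN) by rewrite /A /= F_last cards0 andbT; lia.
have B_first : B (Ordinal firstN) by rewrite /B /= G_next cards0 andbT.
case: (arg_minnP val A_last) => x0 /andP [lx Fx] x0_min.
case: (arg_maxnP val B_first) => y0 /andP [ly Gy] y0_max.
case: (leqP x0 y0) => [xy|yx].
  have [|q /andP [xq _] light] := @exists_light_between x0 y0 _ Fx Gy.
    by rewrite lx.
  by exists q; rewrite ?ltn_ord ?(leq_trans lx xq).
exfalso; apply: (@no_light_gap x0 y0) => // [q /andP [lq qN] Fq|q /andP [lq qN] Gq].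
  by apply: (x0_min (Ordinal qN)); rewrite /A /= lq.
by apply: (y0_max (Ordinal qN)); rewrite /B /= lq.
Qed.

End LinearLayout.

Lemma Gtau_edge_sym (V : finType) (e : rel V) u v R cs :
  symmetric e -> symmetric (Gtau_edge e u v R cs).
Proof. by move=> esym [x|i] [y|j] //=; rewrite esym [(x \in _) && _]andbC. Qed.

Section GtauDrawing.
Variables (V : finType) (e : rel V) (u v : V) (R : {set V}) (cs : seq (V * V)).
Variables (D : seq (V + 'I_(size cs))) (r : nat).
Hypotheses (e_sym : symmetric e) (u_neq_v : u != v)
  (u_notin_R : u \notin R) (v_notin_R : v \notin R)
  (cs_R : forall c, c \in cs -> c.1 \in R)
  (drawing : circular_drawing D (Gtau_vertices u v R cs))
  (D_prefix : prefix (inl u :: rcons (tseq cs) (inl v)) (rot r D)).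

Local Notation l := (size cs).
Local Notation W := (V + 'I_l)%type.
Local Notation E := (Gtau_edge e u v R cs).
Local Notation p z := (index z (rot r D)).
Local Notation pierce i j := (pierce_set E (index ^~ (rot r D)) i j).
Local Notation P := (inl u :: rcons (tseq cs) (inl v) : seq W).

Definition tedges : {set {set W}} :=
  [set [set inr i; inl (nth (u, u) cs i).1] | i : 'I_l].

Lemma card_tedges : #|tedges| <= l.
Proof. by rewrite (leq_trans (leq_imset_card _ _)) // card_ord. Qed.

Lemma pos_prefix z :
  p z = if z \in P then index z P else size P + index z (drop (size P) (rot r D)).
Proof.
case/prefixP: D_prefix => s ->; rewrite drop_size_cat // index_cat.
by case: ifP.
Qed.

Lemma inl_inj : injective (@inl V 'I_l).
Proof. by move=> ? ? []. Qed.

Lemma index_tseq i : index (inr i) (tseq cs) = i.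
Proof. by rewrite /tseq index_map ?index_enum_ord // => ? ? []. Qed.

Lemma inl_notin_tseq x : inl x \notin tseq cs.
Proof. by apply/mapP => [[]]. Qed.

Lemma pos_inl_u : p (inl u) = 0.
Proof. by rewrite pos_prefix mem_head /= eqxx. Qed.

Lemma pos_inl_v : p (inl v) = l.+1.
Proof.
rewrite pos_prefix inE mem_rcons mem_head orbT /= (inj_eq inl_inj).
rewrite (negbTE u_neq_v) -cats1 index_cat (negbTE (inl_notin_tseq v)) /= eqxx.
by rewrite /tseq size_map size_enum_ord addn0.
Qed.

Lemma pos_inr i : p (inr i) = i.+1.
Proof.
have iP : (inr i : W) \in tseq cs by apply/mapP; exists i; rewrite ?mem_enum.
by rewrite pos_prefix inE mem_rcons inE iP orbT /= -cats1 index_cat iP index_tseq.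
Qed.

Lemma size_prefix : size P = l.+2.
Proof. by rewrite /= size_rcons /tseq size_map size_enum_ord. Qed.

Lemma pos_inl_other x : x != u -> x != v -> l.+1 < p (inl x).
Proof.
move=> xu xv; rewrite pos_prefix size_prefix ifF ?ltnS ?leq_addr //.
rewrite !inE mem_rcons !inE (negbTE (inl_notin_tseq x)) !(inj_eq inl_inj).
by rewrite (negbTE xu) (negbTE xv).
Qed.

Lemma pos_inl_outer x : (p (inl x) == 0) || (l < p (inl x)).
Proof.
case: (eqVneq x u) => [->|xu]; first by rewrite pos_inl_u.
case: (eqVneq x v) => [->|xv]; first by rewrite pos_inl_v ltnSn orbT.
by rewrite ltnW ?orbT // pos_inl_other.
Qed.

Lemma uniq_D : uniq D. Proof. by case: drawing. Qed.

Lemma mem_D z : (z \in D) = (z \in Gtau_vertices u v R cs).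
Proof. by case: drawing. Qed.

Lemma pos_lt z : z \in D -> p z < size D.
Proof. by rewrite -(size_rot r D) index_mem mem_rot. Qed.

Lemma inl_in_D x : x \in URset u v R -> inl x \in D.
Proof. by move=> xU; rewrite mem_D inE. Qed.

Lemma E_in_D a b : E a b -> (a \in D) && (b \in D).
Proof.
have cR (i : 'I_l) : (nth (u, u) cs i).1 \in URset u v R.
  by rewrite !inE cs_R ?orbT // mem_nth.
rewrite !mem_D !inE; case: a => [x|i]; case: b => [y|j] //=.
- by case/and3P => _ -> ->.
- by move/eqP ->; rewrite cR.
- by move/eqP ->.
Qed.

Lemma R_of_pos q : l.+1 < q < size D -> exists2 s, s \in R & p (inl s) = q.
Proof.
move=> /andP [lq qD]; have qrD : q < size (rot r D) by rewrite size_rot.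
have : nth (inl u) (rot r D) q \in D /\ p (nth (inl u) (rot r D) q) = q.
  by rewrite -(mem_rot r) mem_nth // index_uniq // rot_uniq uniq_D.
case: (nth _ _ _) => [x|i] []; rewrite mem_D inE.
  rewrite !inE => /or3P [/eqP->|/eqP->|xR]; first by rewrite pos_inl_u; lia.
    by rewrite pos_inl_v; lia.
  by exists x.
by rewrite pos_inr; have := ltn_ord i; lia.
Qed.

Lemma npierce_pos x y : x \in D -> y \in D -> npierce E D x y = #|pierce (p x) (p y)|.
Proof. by move=> xD yD; rewrite /npierce (piercing_edges_rot r uniq_D E_in_D). Qed.

Lemma Gtau_light_vertex k : R != set0 -> l <= k -> outer_kplanar E D k ->
  exists2 w, w \in R &
    (npierce E D (inl u) (inl w) <= k) && (npierce E D (inl v) (inl w) <= k).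
Proof.
move=> R0 lk planar.
have [||||||q lqD light] :=
  @exists_light_pos W E (index ^~ (rot r D)) k l (size D) tedges.
- exact: Gtau_edge_sym.
- by move=> a b /E_in_D /andP [aD _]; apply: pos_lt.
- exact: leq_trans card_tedges lk.
- move=> [x|i] b Eab nT /=; first exact: pos_inl_outer.
  case: b Eab nT => // x /eqP -> /negP []; apply/imsetP; exists i => //.
- move=> a b Eab; case/andP: (E_in_D Eab) => aD bD.
  by rewrite -npierce_pos // -ncross_npierce; apply: planar.
- case/set0Pn: R0 => s sR; have sD : inl s \in D by rewrite inl_in_D // !inE sR !orbT.
  have su : s != u by apply: contraNneq u_notin_R => <-.
  have sv : s != v by apply: contraNneq v_notin_R => <-.
  exact: leq_ltn_trans (pos_inl_other su sv) (pos_lt sD).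
have [s sR ps] := R_of_pos lqD.
exists s; rewrite // !npierce_pos ?pos_inl_u ?pos_inl_v ?ps //.
all: by rewrite inl_in_D // !inE ?eqxx ?sR ?orbT.
Qed.
End GtauDrawing.

Theorem lemma5p2 (V : finType) (e : rel V) (k : nat) (u v : V) (R : {set V})
  (cs : seq (V * V)) (chi : V * V -> 'I_k.+1)
  (D : seq (V + 'I_(size cs))) :
  symmetric e -> irreflexive e ->
  u != v -> R != set0 -> u \notin R -> v \notin R ->
  (* cs lists C = edges between R and L := V \ ({u,v} u R), each exactly once *)
  uniq cs ->
  (forall r l, ((r, l) \in cs) = [&& r \in R, l \in ~: URset u v R & e r l]) ->
  size cs <= k ->
  circular_drawing D (Gtau_vertices u v R cs) ->
  outer_kplanar (Gtau_edge e u v R cs) D k ->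
  (exists r, prefix (inl u :: rcons (tseq cs) (inl v)) (rot r D)) ->
  (forall i : 'I_(size cs),
     nat_of_ord (chi (nth (u, u) cs i)) =
     ncross (Gtau_edge e u v R cs) D (inl (nth (u, u) cs i).1) (inr i)) ->
  exists w, w \in R /\
    npierce (Gtau_edge e u v R cs) D (inl u) (inl w) <= k /\
    npierce (Gtau_edge e u v R cs) D (inl v) (inl w) <= k.
Proof.
move=> e_sym _ u_neq_v R0 u_notin_R v_notin_R _ cs_edges cs_le_k drawing planar.
move=> [r D_prefix] _.
have cs_R c : c \in cs -> c.1 \in R by case: c => a b; rewrite cs_edges => /and3P [].
have [w wR /andP [light_u light_v]] := Gtau_light_vertex e_sym u_neq_v u_notin_R v_notin_R
  cs_R drawing D_prefix R0 cs_le_k planar.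
by exists w.
Qed.
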